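(* Let $p$ be a prime, $q=p^r$, $m,n\ge1$, and $0\le l\le r-1$. Let $\mathscr{C}\subseteq\mathrm{GF}(q^m)^n$ be a scalable code, $\mathscr{B}$ a basis of $\mathrm{GF}(q^m)$ over $\mathrm{GF}(q)$ and $\mathscr{B}'=\{\beta_1,\ldots,\beta_m\}$ its dual basis. Then $\mathrm{Im}_{\mathscr{B}}(\mathscr{C})$ is self-orthogonal w.r.t. the Hermitian-type product $\tilde h_l(x,y)=\sum_{i=1}^{mn}x_iy_i^{p^l}$ on $\mathrm{GF}(q)^{mn}$ if and only if $$\Big(\sum_{i=1}^n x_iy_i^{p^lq^k}\Big)\Big(\sum_{j=1}^m\beta_j^{1+p^lq^k}\Big)=0$$ for all $x=(x_1,\ldots,x_n),y=(y_1,\ldots,y_n)\in\mathscr{C}$ and all $0\le k\le m-1$.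
   Context: $\mathrm{Tr}:\mathrm{GF}(q^m)\to\mathrm{GF}(q)$, $\mathrm{Tr}(a)=\sum_{i=0}^{m-1}a^{q^i}$. The dual basis of a basis $\{\gamma_1,\ldots,\gamma_m\}$ is the unique basis $\{\beta_1,\ldots,\beta_m\}$ with $\mathrm{Tr}(\gamma_i\beta_j)=\delta_{ij}$. A code $\mathscr{C}\subseteq\mathrm{GF}(q^m)^n$ is scalable if $x\in\mathscr{C}\Rightarrow\alpha x\in\mathscr{C}$ for all $\alpha\in\mathrm{GF}(q^m)$. $\mathrm{Im}_{\mathscr{B}}(\mathscr{C})=\{(\mathrm{Tr}(\beta_1x_1),\ldots,\mathrm{Tr}(\beta_1x_n),\ldots,\mathrm{Tr}(\beta_mx_1),\ldots,\mathrm{Tr}(\beta_mx_n)):x\in\mathscr{C}\}\subseteq\mathrm{GF}(q)^{mn}$. A code $D$ is self-orthogonal w.r.t. a form $g$ if $g(x,y)=0$ for all $x,y\in D$. *)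

From HB Require Import structures.
From mathcomp Require Import all_boot all_order all_algebra all_field.
Set Implicit Arguments. Unset Strict Implicit. Unset Printing Implicit Defensive.
Import GRing.Theory.
Local Open Scope ring_scope.

(* K plays the role of GF(q^m); GF(q) is the subfield {a | a^q = a} of K. *)

Definition in_subfield (K : finFieldType) (q : nat) (a : K) : bool := a ^+ q == a.

Definition Tr (K : finFieldType) (q m : nat) (a : K) : K :=
  \sum_(i < m) a ^+ (q ^ i).

(* gamma_1..gamma_m is a basis of K over GF(q) (K has q^m elements, so
   m GF(q)-linearly independent elements form a basis) *)
Definition is_basis (K : finFieldType) (q m : nat) (g : 'I_m -> K) : Prop :=
  forall c : 'I_m -> K, (forall i, @in_subfield K q (c i)) ->
    \sum_(i < m) c i * g i = 0 -> forall i, c i = 0.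

Definition is_dual_basis (K : finFieldType) (q m : nat) (g b : 'I_m -> K) : Prop :=
  forall i j, @Tr K q m (g i * b j) = (i == j)%:R.

Definition scalable_code (K : finFieldType) (n : nat) (C : {set 'rV[K]_n}) : Prop :=
  forall (a : K) (x : 'rV[K]_n), x \in C -> a *: x \in C.

(* the image map: x |-> (Tr(b_1 x_1),...,Tr(b_1 x_n),...,Tr(b_m x_1),...,Tr(b_m x_n));
   mxvec flattens an m x n matrix in row-major order. *)
Definition Im_vec (K : finFieldType) (q m n : nat) (b : 'I_m -> K) (x : 'rV[K]_n)
  : 'rV[K]_(m * n) :=
  mxvec (\matrix_(j < m, i < n) @Tr K q m (b j * x 0 i)).

Definition Im_code (K : finFieldType) (q m n : nat) (b : 'I_m -> K)
  (C : {set 'rV[K]_n}) : 'rV[K]_(m * n) -> Prop :=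
  fun u => exists2 x, x \in C & u = @Im_vec K q m n b x.

Definition htilde (K : finFieldType) (p l N : nat) (x y : 'rV[K]_N) : K :=
  \sum_(i < N) x 0 i * (y 0 i) ^+ (p ^ l).

Definition self_orthogonal (K : finFieldType) (N : nat)
  (g : 'rV[K]_N -> 'rV[K]_N -> K) (D : 'rV[K]_N -> Prop) : Prop :=
  forall x y, D x -> D y -> g x y = 0.

(* Tr takes values in GF(q), the fixed field of x |-> x^q, so it is GF(q)-linear and
   commutes with the Frobenius powers x |-> x^(p^t).  Expanding with these two facts gives
   h~_l(Im x, Im y) = Tr (sum_k S_k(x,y) W_k), with S_k(x,y) = sum_i x_i y_i^(p^l q^k) and
   W_k = sum_j b_j^(1 + p^l q^k); this identity holds for every family b.  Replacing x, y by a x, c y turns the right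
   side into Tr (a * sum_k S_k W_k c^(p^l q^k)).  As the trace form is nondegenerate,
   self-orthogonality forces sum_k S_k W_k c^(p^l q^k) = 0 for all c; the exponents
   p^l q^k are distinct and, because l < r, smaller than q^m = |K|, so each coefficient
   S_k W_k vanishes. *)

From HB Require Import structures.
From mathcomp Require Import all_boot all_order all_algebra all_field.
Set Implicit Arguments.
Unset Strict Implicit.
Unset Printing Implicit Defensive.
Import GRing.Theory.
Local Open Scope ring_scope.

Lemma pchar_nat_expn (R : nzRingType) (p t : nat) :
  p \in [pchar R] -> [pchar R].-nat (p ^ t)%N.
Proof.
move=> pcharRp; rewrite pnatX (eq_pnat _ (pcharf_eq pcharRp)) pnat_id //.
exact: pcharf_prime pcharRp.
Qed.

Lemma expr_sum_pchar (R : comNzRingType) (I : Type) (r : seq I) (P : pred I)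
    (F : I -> R) (e : nat) :
  [pchar R].-nat e -> (\sum_(i <- r | P i) F i) ^+ e = \sum_(i <- r | P i) F i ^+ e.
Proof.
move=> pcharRe; apply: (big_morph (fun x => x ^+ e)) => [x y|].
  exact: exprDn_pchar.
by rewrite expr0n; case: e pcharRe.
Qed.

Lemma finField_poly_eq0 (F : finFieldType) (P : {poly F}) :
  (size P <= #|F|)%N -> (forall x, P.[x] = 0) -> P = 0.
Proof.
move=> sizeP P0; apply/eqP; apply: contraTT sizeP => nzP; rewrite -ltnNge.
have rootsP : all (root P) (enum F) by apply/allP => x _; rewrite /root P0.
by have := max_poly_roots nzP rootsP (enum_uniq _); rewrite -cardE.
Qed.

Lemma sum_monomials_eq0 (F : finFieldType) (I : finType) (d : I -> F) (e : I -> nat) :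
  injective e -> (forall i, e i < #|F|)%N ->
  (forall x, \sum_i d i * x ^+ e i = 0) -> forall i, d i = 0.
Proof.
move=> inj_e lt_e vanish i.
pose P := \sum_j d j *: 'X^(e j).
have P0 : P = 0.
  apply: finField_poly_eq0 => [|x]; last first.
    by rewrite horner_sum -[RHS](vanish x); apply: eq_bigr => j _; rewrite hornerZ hornerXn.
  rewrite (leq_trans (size_sum _ _ _)) //; apply/bigmax_leqP => j _.
  by rewrite (leq_trans (size_scale_leq _ _)) // size_polyXn.
have := congr1 (coefp (e i)) P0; rewrite /= coef0 coef_sum (bigD1 i) //= coefZ coefXn eqxx mulr1.
rewrite big1 ?addr0 // => j /negbTE neq_ji.
by rewrite coefZ coefXn (inj_eq inj_e) eq_sym neq_ji mulr0.
Qed.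

Section FiniteFieldTrace.
Variables (K : finFieldType) (p r m : nat).
Hypothesis pcharK : p \in [pchar K].
Hypothesis cardK : #|K| = ((p ^ r) ^ m)%N.
Local Notation q := (p ^ r)%N.
Local Notation tr := (@Tr K q m).

Lemma q_gt1 : (1 < q)%N.
Proof.
have := card_finNzRing_gt1 K; rewrite cardK.
by move: q => [|[|//]]; rewrite ?exp1n //; case: (m) => [|k]; rewrite ?expn0 ?exp0n.
Qed.

Lemma expr_q_fixed (w : K) k : w ^+ q = w -> w ^+ (q ^ k) = w.
Proof. by move=> wq; elim: k => [|k IHk]; rewrite ?expr1 // expnSr exprM IHk wq. Qed.

Lemma Tr_sum (I : finType) (F : I -> K) : tr (\sum_i F i) = \sum_i tr (F i).
Proof.
by rewrite /Tr exchange_big; apply: eq_bigr => k _; rewrite expr_sum_pchar // -expnM pchar_nat_expn.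
Qed.

Lemma Tr_expr_q z : tr z ^+ q = tr z.
Proof.
rewrite /Tr expr_sum_pchar ?pchar_nat_expn //.
under eq_bigr do rewrite -exprM -expnSr.
case: m cardK => [|m'] cardK'; first by rewrite !big_ord0.
by rewrite big_ord_recr big_ord_recl /= -cardK' expf_card expn0 expr1 addrC.
Qed.

Lemma Tr_mulr_fixed z w : w ^+ q = w -> tr (z * w) = tr z * w.
Proof.
move=> wq; rewrite /Tr mulr_suml; apply: eq_bigr => k _.
by rewrite exprMn (expr_q_fixed _ wq).
Qed.

Lemma Tr_expr_pchar t z : tr z ^+ (p ^ t) = \sum_(k < m) z ^+ (p ^ t * q ^ k).
Proof.
rewrite /Tr expr_sum_pchar ?pchar_nat_expn //.
by apply: eq_bigr => k _; rewrite -exprM mulnC.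
Qed.

Lemma Tr_nondegenerate z : (0 < m)%N -> (forall a, tr (a * z) = 0) -> z = 0.
Proof.
move=> m_gt0 Tr_az0.
have := @sum_monomials_eq0 K _ (fun k : 'I_m => z ^+ (q ^ k)) (fun k => q ^ k)%N.
move=> /(_ _ _ _ (Ordinal m_gt0)); rewrite /= expr1; apply.
- by move=> k1 k2 /(expnI q_gt1) /val_inj.
- by move=> k; rewrite cardK ltn_exp2l ?q_gt1.
- by move=> a; rewrite -[RHS](Tr_az0 a); apply: eq_bigr => k _; rewrite exprMn mulrC.
Qed.

Lemma Tr0 : tr 0 = 0.
Proof. by rewrite /Tr big1 // => k _; rewrite expr0n gtn_eqF // expn_gt0 ltnW ?q_gt1. Qed.

Lemma Tr_mul_exprTr z w e : tr z * tr w ^+ e = tr (z * tr w ^+ e).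
Proof. by rewrite Tr_mulr_fixed // exprAC Tr_expr_q. Qed.

Section ImageCode.
Variables (n l : nat) (b : 'I_m -> K).

Definition twist (k : nat) : nat := (p ^ l * q ^ k)%N.

Definition pow_dot (e : nat) (x y : 'rV[K]_n) : K := \sum_(i < n) x 0 i * y 0 i ^+ e.

Definition pow_weight (e : nat) : K := \sum_(j < m) b j ^+ (1 + e).

Lemma htilde_mxvec (M N : 'M[K]_(m, n)) :
  htilde p l (mxvec M) (mxvec N) = \sum_(j < m) \sum_(i < n) M j i * N j i ^+ (p ^ l).
Proof.
rewrite /htilde (reindex _ (curry_mxvec_bij m n)) /= pair_big /=.
by apply: eq_bigr => -[j i] _; rewrite !mxvecE.
Qed.

Lemma htilde_Im_vec x y :
  htilde p l (Im_vec q b x) (Im_vec q b y) =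
  tr (\sum_(k < m) pow_dot (twist k) x y * pow_weight (twist k)).
Proof.
rewrite /Im_vec htilde_mxvec.
under eq_bigr do under eq_bigr do rewrite !mxE Tr_mul_exprTr.
under eq_bigr do rewrite -Tr_sum.
rewrite -Tr_sum; congr tr.
under eq_bigr do under eq_bigr do rewrite Tr_expr_pchar mulr_sumr.
under [RHS]eq_bigr do rewrite big_distrlr.
under eq_bigr do rewrite exchange_big.
rewrite exchange_big; apply: eq_bigr => k _; rewrite exchange_big.
apply: eq_bigr => i _; apply: eq_bigr => j _.
by rewrite exprMn add1n exprS mulrACA mulrC.
Qed.

Lemma pow_dot_scale e a c x y : pow_dot e (a *: x) (c *: y) = a * c ^+ e * pow_dot e x y.
Proof.
by rewrite /pow_dot mulr_sumr; apply: eq_bigr => i _; rewrite !mxE exprMn mulrACA.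
Qed.

Lemma htilde_Im_vec_scale a c x y :
  htilde p l (Im_vec q b (a *: x)) (Im_vec q b (c *: y)) =
  tr (a * \sum_(k < m) pow_dot (twist k) x y * pow_weight (twist k) * c ^+ twist k).
Proof.
rewrite htilde_Im_vec mulr_sumr; congr tr; apply: eq_bigr => k _.
by rewrite pow_dot_scale -!mulrA; congr (_ * _); rewrite mulrC mulrA.
Qed.

Lemma twist_inj : (l < r)%N -> injective twist.
Proof.
move=> lt_lr k1 k2; rewrite /twist -!expnM -!expnD.
move=> /(expnI (prime_gt1 (pcharf_prime pcharK))) /addnI /eqP.
by rewrite eqn_pmul2l ?(leq_ltn_trans (leq0n l) lt_lr) // => /eqP.
Qed.

Lemma twist_lt_card k : (l < r)%N -> (k < m)%N -> (twist k < #|K|)%N.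
Proof.
move=> lt_lr lt_km; rewrite cardK /twist -!expnM -!expnD.
rewrite ltn_exp2l ?prime_gt1 ?(pcharf_prime pcharK) //.
apply: (@leq_trans (r + r * k)); first by rewrite ltn_add2r.
by rewrite -mulnS leq_mul2l lt_km orbT.
Qed.

End ImageCode.

End FiniteFieldTrace.

Theorem theorem6 (p r m n l : nat) (K : finFieldType)
  (Hp : prime p) (Hm : (1 <= m)%N) (Hn : (1 <= n)%N) (Hl : (l <= r - 1)%N)
  (Hr : (1 <= r)%N) (HK : #|K| = ((p ^ r) ^ m)%N)
  (C : {set 'rV[K]_n}) (HC : @scalable_code K n C)
  (g b : 'I_m -> K) (Hg : @is_basis K (p ^ r) m g)
  (Hb : @is_dual_basis K (p ^ r) m g b) :
  @self_orthogonal K (m * n) (@htilde K p l (m * n)) (@Im_code K (p ^ r) m n b C) <->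
  (forall x y, x \in C -> y \in C -> forall k : 'I_m,
     (\sum_(i < n) x 0 i * (y 0 i) ^+ (p ^ l * (p ^ r) ^ k)) *
     (\sum_(j < m) (b j) ^+ (1 + p ^ l * (p ^ r) ^ k)) = 0).
Proof.
have pcharK : p \in [pchar K] by apply: (card_finPcharP _ Hp); rewrite HK -expnM.
have lt_lr : (l < r)%N by apply: leq_ltn_trans Hl _; rewrite ltn_subrL Hr.
split => [orth x y xC yC k | vanish _ _ [x xC ->] [y yC ->]].
  have Tr_vanish a c : Tr (p ^ r) m (a * \sum_(k < m)
      pow_dot (twist p r l k) x y * pow_weight b (twist p r l k) * c ^+ twist p r l k) = 0.
    rewrite -(htilde_Im_vec_scale pcharK HK); apply: orth.
      by exists (a *: x); rewrite ?HC.
    by exists (c *: y); rewrite ?HC.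
  have vanish (c : K) := Tr_nondegenerate HK Hm (Tr_vanish^~ c).
  apply: (sum_monomials_eq0 (e := fun k : 'I_m => twist p r l k)) vanish k.
    exact: inj_comp (twist_inj pcharK lt_lr) val_inj.
  by move=> j; rewrite (twist_lt_card pcharK HK lt_lr).
rewrite (htilde_Im_vec pcharK HK) big1 => [|k _]; first exact: Tr0 HK.
exact: vanish.
Qed.
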